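(* For all $\lambda>0$ and all even $L\ge2$, $$Z^{\mathrm{per}}_{R_{2\times L},\lambda}(E)\ge\Big(1+\tfrac12\lambda^{-1/2}\Big)^L,$$ where $E$ is the event that every tile has even horizontal parity (equivalently, $\sigma(x,y)=1$ implies $x$ odd).
   Context: Tiles: $T_{(x,y)}=[x-1,x+1]\times[y-1,y+1]$; $\Omega=\{\sigma\in\{0,1\}^{\mathbb{Z}^2}: \sigma(u)=\sigma(v)=1,u\ne v\Rightarrow\mathrm{int}(T_u)\cap\mathrm{int}(T_v)=\emptyset\}$. The parity of the tile centered at $(x,y)$ is $(x-1\bmod 2,\,y-1\bmod2)$; its first component is the horizontal parity. $R_{K\times L}=[0,K]\times[0,L]$. Faces are unit squares with integer corners, vacant if in no tile. For a rectangle $\Lambda$, $w_{\Lambda,\lambda}(\sigma)=\lambda^{-\frac14\#\{\text{vacant faces}\subset\Lambda\}}$; $\Omega^{\mathrm{per}}_\Lambda$ = configurations in $\Omega$ periodic under translations by $(\mathrm{Width}\Lambda,0)$ and $(0,\mathrm{Height}\Lambda)$; for an event $E$, $Z^{\mathrm{per}}_{\Lambda,\lambda}(E)=\sum_{\sigma\in E\cap\Omega^{\mathrm{per}}_\Lambda}w_{\Lambda,\lambda}(\sigma)$. *)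

From HB Require Import structures.
From mathcomp Require Import all_boot all_order all_algebra.
From mathcomp Require Import all_classical all_reals all_analysis.
Set Implicit Arguments. Unset Strict Implicit. Unset Printing Implicit Defensive.
Import Order.TTheory GRing.Theory Num.Theory.
Local Open Scope classical_set_scope.
Local Open Scope ring_scope.

(* Configurations sigma : Z^2 -> {0,1}, with 1 encoded as true. *)
Definition config := (int * int -> bool)%type.

Section Tiles.
Variable R : realType.

Definition in_tile (u : int * int) (p : R * R) : Prop :=
  (u.1%:~R - 1 <= p.1 <= u.1%:~R + 1) /\ (u.2%:~R - 1 <= p.2 <= u.2%:~R + 1).

Definition in_int_tile (u : int * int) (p : R * R) : Prop :=
  (u.1%:~R - 1 < p.1 < u.1%:~R + 1) /\ (u.2%:~R - 1 < p.2 < u.2%:~R + 1).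

Definition Omega : set config :=
  [set sigma | forall u v : int * int, sigma u -> sigma v -> u <> v ->
     forall p : R * R, ~ (in_int_tile u p /\ in_int_tile v p)].

Definition in_face (f : int * int) (p : R * R) : Prop :=
  (f.1%:~R <= p.1 <= f.1%:~R + 1) /\ (f.2%:~R <= p.2 <= f.2%:~R + 1).

Definition vacant (sigma : config) (f : int * int) : Prop :=
  ~ exists u : int * int, sigma u /\ (forall p, in_face f p -> in_tile u p).

(* Number of vacant faces contained in R_{K x L} = [0,K] x [0,L];
   these faces are exactly [i,i+1] x [j,j+1] with 0 <= i < K, 0 <= j < L. *)
Definition nvacant (K L : nat) (sigma : config) : nat :=
  #|[set ij : 'I_K * 'I_L | `[< vacant sigma ((ij.1 : nat)%:Z, (ij.2 : nat)%:Z) >] ]|.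

Definition weight (K L : nat) (lambda : R) (sigma : config) : R :=
  lambda `^ (- (1 / 4) * (nvacant K L sigma)%:R).

Definition periodic (K L : nat) (sigma : config) : Prop :=
  forall u : int * int,
    sigma (u.1 + K%:Z, u.2) = sigma u /\ sigma (u.1, u.2 + L%:Z) = sigma u.

Definition Omega_per (K L : nat) : set config :=
  Omega `&` [set sigma | periodic K L sigma].

Definition Zper (K L : nat) (lambda : R) (E : set config) : R :=
  \sum_(sigma \in E `&` Omega_per K L) weight K L lambda sigma.

End Tiles.

Definition horiz_parity (u : int * int) : int := ((u.1 - 1) %% 2)%Z.

Definition E_even_horiz : set config :=
  [set sigma | forall u : int * int, sigma u -> horiz_parity u = 0].

(* Tiles whose centres have odd abscissa all sit in one column
   of the 2-periodic strip.  Given a set f of rows of the cycle Z/LZ with no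
   two cyclically adjacent rows (a "hardcore" set), placing a tile at every
   odd column and every row of f gives an admissible periodic configuration
   in E; a row y such that neither y nor y+1 is in f leaves its two faces
   vacant, i.e. costs a factor a = lambda^(-1/2).  Summing over such f gives
   a lower bound by the trace of the L-th power of the transfer matrix
   T = [[0,1],[1,a]], which is mu_+^L + mu_-^L with eigenvalues
   mu_(+/-) = (a +/- sqrt(a^2+4))/2.  For even L both terms are nonnegative,
   and mu_+ >= 1 + a/2. *)

From Pilot Require Import Defs.
From HB Require Import structures.
From mathcomp Require Import all_boot all_order all_algebra.
From mathcomp Require Import all_classical all_reals all_analysis.
From mathcomp Require Import ring lra zify.
Import Order.TTheory GRing.Theory Num.Theory.
Set Implicit Arguments. Unset Strict Implicit. Unset Printing Implicit Defensive.
Local Open Scope classical_set_scope.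
Local Open Scope ring_scope.

Lemma ordS_invariant_const {T : Type} {n} (k : 'I_n.+1 -> T) :
  (forall j, k (ordS j) = k j) -> forall i, k i = k ord0.
Proof.
move=> kS [m]; elim: m => [|m IH] hm; first by congr k; apply: val_inj.
have -> : Ordinal hm = ordS (Ordinal (ltnW hm)).
  by apply: val_inj; rewrite /= modn_small.
by rewrite kS IH.
Qed.

Section TransferMatrix.
Variable R : rcfType.
Variable a : R.
Hypothesis a_ge0 : 0 <= a.

(* Transfer matrix of the hard-core chain with vacancy weight a, indexed by
   the occupation (true = occupied) of two consecutive rows. *)
Definition transfer (x y : bool) : R :=
  if x then (if y then 0 else 1) else (if y then 1 else a).

Let disc : R := Num.sqrt (a ^+ 2 + 4).

Let disc_sqr : disc ^+ 2 = a ^+ 2 + 4.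
Proof. by rewrite sqr_sqrtr // addr_ge0 // sqr_ge0. Qed.

Let disc_ge2 : 2 <= disc.
Proof. have d0 : 0 <= disc := sqrtr_ge0 _; have := disc_sqr; nra. Qed.

Let disc_neq0 : disc != 0.
Proof. by apply/eqP => d0; move: disc_ge2; rewrite d0; lra. Qed.

(* Eigenvalues of the transfer matrix, eigenvectors (1, eigval k) indexed by
   occupation, and the coefficients normalising the spectral decomposition. *)
Definition eigval (k : bool) : R := if k then (a + disc) / 2 else (a - disc) / 2.
Definition eigcoef (k : bool) : R := if k then disc^-1 else - disc^-1.
Definition eigvec (k x : bool) : R := if x then 1 else eigval k.

Lemma transfer_spectral x y :
  transfer x y = \sum_k eigcoef k * (eigvec k x * eigvec k y).
Proof.
rewrite big_bool /transfer /eigcoef /eigvec /eigval.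
case: x; case: y => /=; field => //; by rewrite disc_sqr; ring.
Qed.

Definition eig_pairing (k k' : bool) : R :=
  eigcoef k * \sum_x eigvec k x * eigvec k' x.

Lemma eig_pairingE k k' : eig_pairing k k' = if k == k' then eigval k else 0.
Proof.
have one_sqr : 1 * 1 = (disc ^+ 2 - a ^+ 2) / 4 :> R by rewrite disc_sqr; field.
rewrite /eig_pairing big_bool /eigcoef /eigvec /eigval.
by case: k; case: k' => /=; rewrite one_sqr; field.
Qed.

(* The partition function of the hard-core chain on the cycle 'I_L:
   the trace of the L-th power of the transfer matrix. *)
Definition cycle_sum (L : nat) : R :=
  \sum_(f : {ffun 'I_L -> bool}) \prod_(j : 'I_L) transfer (f j) (f (ordS j)).

(* Inserting the spectral decomposition at every edge of the cycle and
   summing out the spins leaves a sum over eigen-labellings of the cycle. *)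
Lemma cycle_sum_spectral L :
  cycle_sum L =
  \sum_(k : {ffun 'I_L -> bool}) \prod_(j : 'I_L) eig_pairing (k j) (k (ord_pred j)).
Proof.
rewrite /cycle_sum.
under eq_bigr => f _ do under eq_bigr => j _ do rewrite transfer_spectral.
under eq_bigr => f _ do rewrite bigA_distr_bigA /=.
rewrite exchange_big /=; apply: eq_bigr => k _.
transitivity (\sum_(f : {ffun 'I_L -> bool}) (\prod_j eigcoef (k j)) *
   \prod_j (eigvec (k j) (f j) * eigvec (k (ord_pred j)) (f j))).
  apply: eq_bigr => f _; rewrite big_split /= big_split /=; congr (_ * _).
  rewrite [RHS]big_split /=; congr (_ * _).
  rewrite [RHS](reindex_inj (@ordS_inj L)) /=.
  by apply: eq_bigr => j _; rewrite ordSK.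
rewrite -big_distrr /=.
rewrite -(bigA_distr_bigA (fun j x => eigvec (k j) x * eigvec (k (ord_pred j)) x)).
by rewrite -big_split.
Qed.

(* Only the two constant eigen-labellings contribute, with eigval k ^+ L;
   for even L every contribution is therefore nonnegative. *)
Lemma spectral_term_ge0 L (k : {ffun 'I_L -> bool}) : ~~ odd L ->
  0 <= \prod_(j : 'I_L) eig_pairing (k j) (k (ord_pred j)).
Proof.
move=> evenL.
have [kconst|] := boolP [forall j, k j == k (ord_pred j)]; last first.
  case/forallPn => j kj; rewrite (bigD1 j) //= eig_pairingE (negbTE kj).
  by rewrite mul0r.
case: L k evenL kconst => [|n] k evenL /forallP kconst; first by rewrite big_ord0.
have kS j : k (ordS j) = k j by have := eqP (kconst (ordS j)); rewrite ordSK.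
have kc := @ordS_invariant_const bool n k kS.
under eq_bigr => j _ do rewrite !kc eig_pairingE eqxx.
by rewrite prodr_const card_ord exprn_even_ge0.
Qed.

(* Keeping only the dominant term eigval true ^+ L of the spectral sum. *)
Lemma cycle_sum_ge L : ~~ odd L -> (1 + a / 2) ^+ L <= cycle_sum L.
Proof.
move=> evenL; rewrite cycle_sum_spectral (bigD1 [ffun => true]) //=.
apply: (@le_trans _ _ (eigval true ^+ L)).
  by apply: lerXn2r; rewrite ?nnegrE /=; move: disc_ge2 a_ge0; lra.
under eq_bigr => j _ do rewrite !ffunE eig_pairingE eqxx.
rewrite prodr_const card_ord lerDl; apply: sumr_ge0 => k _.
exact: spectral_term_ge0.
Qed.

End TransferMatrix.

Definition wrap n (y : int) : 'I_n.+1 := inord `|(y %% n.+1%:Z)%Z|%N.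

Lemma wrap_val n (y : int) : (wrap n y : nat)%:Z = (y %% n.+1%:Z)%Z.
Proof. rewrite /wrap inordK; lia. Qed.

Lemma wrap_ord n (j : 'I_n.+1) : wrap n (j : nat)%:Z = j.
Proof.
by apply: val_inj; case: j => m mlt /=; rewrite /wrap modz_nat modn_small // inordK.
Qed.

Lemma wrapDr n (y : int) : wrap n (y + n.+1%:Z) = wrap n y.
Proof. by rewrite /wrap modzDr. Qed.

Lemma wrapS n (y : int) : wrap n (y + 1) = ordS (wrap n y).
Proof.
apply: val_inj => /=; rewrite /wrap.
have ymod : (`|(y %% n.+1%:Z)%Z|%N)%:Z = (y %% n.+1%:Z)%Z by lia.
have ybound : (`|(y %% n.+1%:Z)%Z|%N < n.+1)%N by lia.
rewrite (inordK ybound) inordK; last by lia.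
by rewrite -modzDml -ymod -PoszD addn1 modz_nat.
Qed.

Definition column_config n (f : {ffun 'I_n.+1 -> bool}) : config :=
  fun u => ((u.1 %% 2)%Z == 1%Z) && f (wrap n u.2).

Definition hardcore n (f : {ffun 'I_n.+1 -> bool}) : bool :=
  [forall j, ~~ (f j && f (ordS j))].

Lemma overlap_lt (R : realType) (x y : int) (q : R) :
  x%:~R - 1 < q -> q < y%:~R + 1 -> (x < y + 2)%R.
Proof. by move=> xq qy; rewrite -(ltr_int R) intrD; lra. Qed.

Lemma face_in_tile (R : realType) (i j : int) (u : int * int) :
  (forall p : R * R, in_face (i, j) p -> in_tile u p) <->
  (u.1 - 1 <= i /\ i <= u.1 /\ u.2 - 1 <= j /\ j <= u.2)%R.
Proof.
split=> [cover | [e1 [e2 [e3 e4]]] [p1 p2] [/andP[f1 f2] /andP[f3 f4]]].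
  have [/andP[c1 c2] /andP[c3 c4]] :
      in_tile u (((i + 1)%:~R : R), ((j + 1)%:~R : R)).
    by apply: cover; rewrite /in_face /= !intrD; split; apply/andP; split; lra.
  have [/andP[d1 d2] /andP[d3 d4]] : in_tile u ((i%:~R : R), (j%:~R : R)).
    by apply: cover; rewrite /in_face /=; split; apply/andP; split; lra.
  move: c1 c2 c3 c4 d1 d2 d3 d4 => /= c1 c2 c3 c4 d1 d2 d3 d4.
  rewrite !intrD in c2 c4.
  rewrite -!(ler_int R) !intrB.
  by split; [|split; [|split]]; lra.
move: f1 f2 f3 f4 e1 e2 e3 e4 => /= f1 f2 f3 f4.
rewrite -!(ler_int R) !intrB => e1 e2 e3 e4.
by split; apply/andP; split => /=; lra.
Qed.

Section ColumnConfig.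
Variable n : nat.
Implicit Types f : {ffun 'I_n.+1 -> bool}.

Lemma column_config_even f : E_even_horiz (column_config f).
Proof. by move=> u /andP[/eqP u1odd _]; rewrite /horiz_parity; lia. Qed.

Lemma column_config_periodic f : Defs.periodic 2 n.+1 (column_config f).
Proof.
move=> [x y]; rewrite /column_config /= wrapDr; split => //.
by have -> : ((x + 2%:Z) %% 2 = x %% 2)%Z by lia.
Qed.

(* Tiles of a hardcore column configuration lie in the same column and,
   being at distinct non-adjacent rows, have disjoint interiors. *)
Lemma column_config_Omega (R : realType) f :
  hardcore f -> Defs.Omega R (column_config f).
Proof.
move=> /forallP hc [u1 u2] [v1 v2] /andP[/eqP u1odd fu] /andP[/eqP v1odd fv] uv.
move=> [p1 p2] [[/andP[h1 h2] /andP[h3 h4]] [/andP[h5 h6] /andP[h7 h8]]].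
move: u1odd v1odd fu fv uv h1 h2 h3 h4 h5 h6 h7 h8 => /= u1odd v1odd fu fv uv.
move=> h1 h2 h3 h4 h5 h6 h7 h8.
have := overlap_lt h1 h6; have := overlap_lt h5 h2.
have := overlap_lt h3 h8; have := overlap_lt h7 h4 => b1 b2 b3 b4.
have same_col : u1 = v1 by lia.
have : (v2 = u2 + 1 \/ u2 = v2 + 1 \/ u2 = v2)%R by lia.
case=> [e|[e|e]].
- by have := hc (wrap n u2); rewrite -wrapS -e fu fv.
- by have := hc (wrap n v2); rewrite -wrapS -e fu fv.
- by apply: uv; rewrite same_col e.
Qed.

Lemma vacant_column_config (R : realType) f (i : 'I_2) (j : 'I_n.+1) :
  Defs.vacant R (column_config f) ((i : nat)%:Z, (j : nat)%:Z) <->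
  ~~ f j && ~~ f (ordS j).
Proof.
have ilt2 := ltn_ord i; split.
  move=> hv; apply/andP; split; apply/negP => fj; apply: hv.
    exists (1%:Z, (j : nat)%:Z); split; first by rewrite /column_config /= wrap_ord fj.
    by apply/face_in_tile => /=; lia.
  exists (1%:Z, (j : nat)%:Z + 1); split.
    by rewrite /column_config /= wrapS wrap_ord fj.
  by apply/face_in_tile => /=; lia.
move=> /andP[fj fSj] [[u1 u2] [/andP[_ fu] /face_in_tile /= cover]].
have : (u2 = (j : nat)%:Z \/ u2 = (j : nat)%:Z + 1)%R by lia.
by case=> row; move: fu; rewrite /= row ?wrapS wrap_ord ?(negbTE fj) ?(negbTE fSj).
Qed.

Definition gaps f : {set 'I_n.+1} := [set j | ~~ f j && ~~ f (ordS j)].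

Lemma nvacant_column_config (R : realType) f :
  Defs.nvacant R 2 n.+1 (column_config f) = (2 * #|gaps f|)%N.
Proof.
rewrite /Defs.nvacant -[2%N in RHS](card_ord 2) -cardsT -cardsX.
apply: eq_card => -[i j]; rewrite !inE /=.
apply/idP/idP => [/set_mem/asboolP/vacant_column_config // | jgap].
exact/mem_set/asboolP/vacant_column_config.
Qed.

(* Each uncovered row contributes two vacant faces, i.e. a factor
   lambda^(-1/2); for hardcore f this is the transfer-matrix product. *)
Lemma weight_column_config (R : realType) (lambda : R) f :
  0 < lambda -> hardcore f ->
  Defs.weight 2 n.+1 lambda (column_config f) =
  \prod_j transfer (lambda `^ (- (1 / 2))) (f j) (f (ordS j)).
Proof.
move=> lambda_gt0 /forallP hc; rewrite /Defs.weight nvacant_column_config.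
transitivity (\prod_(j in gaps f) lambda `^ (- (1 / 2))).
  rewrite prodr_const natrM mulrA.
  have -> : - (1 / 4) * 2%:R = - (1 / 2) :> R by field.
  by rewrite powRrM powR_mulrn // powR_ge0.
rewrite big_mkcond /=; apply: eq_bigr => j _; move: (hc j).
by rewrite inE /transfer; case: (f j); case: (f (ordS j)).
Qed.

Lemma transfer_prod_eq0 (R : rcfType) (a : R) f :
  ~~ hardcore f -> \prod_j transfer a (f j) (f (ordS j)) = 0.
Proof.
case/forallPn => j; rewrite negbK => /andP[fj fSj].
by rewrite (bigD1 j) //= fj fSj mul0r.
Qed.

End ColumnConfig.

Lemma periodic_mod (g : int -> bool) (d : int) :
  (forall x, g (x + d) = g x) -> forall x, g x = g (x %% d)%Z.
Proof.
move=> gper x.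
have gperN (m : nat) y : g (y + m%:Z * d) = g y.
  elim: m => [|m IH]; first by rewrite mul0r addr0.
  by rewrite -[m.+1]addn1 PoszD mulrDl mul1r addrA gper IH.
case: (x %/ d)%Z (divz_eq x d) => m xE; first by rewrite {1}xE addrC gperN.
have -> : (x %% d)%Z = x + m.+1%:Z * d by rewrite {2}xE NegzE; ring.
by rewrite gperN.
Qed.

(* A (K.+1, L.+1)-periodic configuration is determined by its restriction
   to a fundamental domain, so there are finitely many of them. *)
Lemma periodic_finite K L :
  finite_set [set sigma : config | Defs.periodic K.+1 L.+1 sigma].
Proof.
pose extend (h : {ffun 'I_K.+1 * 'I_L.+1 -> bool}) : config :=
  fun u => h (wrap K u.1, wrap L u.2).
apply: (@sub_finite_set _ _ (extend @` setT)); last exact: finite_image.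
move=> sigma sigma_per.
exists [ffun ij : 'I_K.+1 * 'I_L.+1 => sigma ((ij.1 : nat)%:Z, (ij.2 : nat)%:Z)] => //.
apply: funext => -[x y]; rewrite /extend ffunE /= !wrap_val.
rewrite [RHS](@periodic_mod (fun x => sigma (x, y)) K.+1%:Z); last first.
  by move=> z; case: (sigma_per (z, y)).
rewrite [RHS](@periodic_mod (fun y => sigma ((x %% K.+1%:Z)%Z, y)) L.+1%:Z) //.
by move=> z; case: (sigma_per ((x %% K.+1%:Z)%Z, z)).
Qed.

Lemma fsumr_le_subset (R : numDomainType) (I : choiceType) (A B : set I)
    (F : I -> R) :
  finite_set A -> B `<=` A -> (forall x, A x -> 0 <= F x) ->
  \sum_(x \in B) F x <= \sum_(x \in A) F x.
Proof.
move=> Afin BA F_ge0; rewrite (fsbigID B A) // (setIidr BA) lerDl.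
by apply: fsumr_ge0 => x [/F_ge0].
Qed.

(* The hardcore column configurations form a subfamily of the periodic
   configurations in E whose total weight is the cycle partition function
   with vacancy weight lambda^(-1/2). *)
Lemma Zper_ge_cycle_sum (R : realType) (lambda : R) n :
  0 < lambda ->
  cycle_sum (lambda `^ (- (1 / 2))) n.+1 <= Zper 2 n.+1 lambda E_even_horiz.
Proof.
move=> lambda_gt0.
have columns_sub : @column_config n @` [set f | hardcore f] `<=`
                   E_even_horiz `&` Omega_per R 2 n.+1.
  move=> _ [f hc <-]; split; first exact: column_config_even.
  by split; [exact: column_config_Omega | exact: column_config_periodic].
have columns_inj : set_inj [set f | hardcore f] (@column_config n).
  move=> f g _ _ fg; apply/ffunP => j.
  have := congr1 (fun sigma : config => sigma (1%:Z, (j : nat)%:Z)) fg.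
  by rewrite /column_config /= wrap_ord.
apply: le_trans (fsumr_le_subset _ columns_sub _); last 2 first.
- by apply: sub_finite_set (@periodic_finite 1 n) => sigma [_ []].
- by move=> sigma _; apply: powR_ge0.
rewrite fsbig_image // -(@bigfs _ _ _ _ (enum {ffun 'I_n.+1 -> bool})) ?enum_uniq //;
  last by move=> f _; rewrite mem_enum.
rewrite big_enum_cond /= [in X in _ <= X]big_mkcond /=.
rewrite le_eqVlt; apply/orP; left; apply/eqP/eq_bigr => f _; case: ifPn => [hc | /transfer_prod_eq0 -> //].
by rewrite weight_column_config.
Qed.

Theorem proposition4p2 (R : realType) (lambda : R) (L : nat) :
  0 < lambda -> (2 <= L)%N -> ~~ odd L ->
  (1 + (1 / 2) * lambda `^ (- (1 / 2))) ^+ L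
    <= Zper 2 L lambda E_even_horiz.
Proof.
case: L => [//|n] lambda_gt0 _ evenL.
apply: le_trans (Zper_ge_cycle_sum n lambda_gt0).
rewrite mul1r mulrC; apply: cycle_sum_ge evenL.
exact: powR_ge0.
Qed.
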